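(* Let $X$ be a topological space and $(Y,d)$ a metric space. For $f\in C(X,Y)$ and $\epsilon\in LSC(X,(0,1))$ put $B(f,\epsilon)=\{g\in C(X,Y): d(f(x),g(x))<\epsilon(x)\text{ for all }x\in X\}$. Then the family of all sets $B(f,\epsilon)$ with $f\in C(X,Y)$ and $\epsilon\in LSC(X,(0,1))$ is a base for the graph topology $\tau_\Gamma$ on $C(X,Y)$.
   Context: For topological spaces $X,Y$, $C(X,Y)$ denotes the set of continuous maps $X\to Y$; each $f\in C(X,Y)$ is identified with its graph $\{(x,f(x)):x\in X\}\subset X\times Y$. For $G$ open in $X\times Y$ let $F_G=\{f\in C(X,Y): f\subset G\}$. The graph topology $\tau_\Gamma$ on $C(X,Y)$ is the topology having the sets $F_G$ ($G$ open in $X\times Y$) as a base. $LSC(X,(0,1))$ denotes the set of all lower semicontinuous functions $X\to(0,1)$. *)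

From Stdlib Require Import Reals.
Open Scope R_scope.

Record Topology (X : Type) := {
  is_open : (X -> Prop) -> Prop;
  open_full : is_open (fun _ => True);
  open_inter : forall U V, is_open U -> is_open V ->
                 is_open (fun x => U x /\ V x);
  open_union : forall F : (X -> Prop) -> Prop,
                 (forall U, F U -> is_open U) ->
                 is_open (fun x => exists U, F U /\ U x)
}.
Arguments is_open {X} t U.

Record Metric (Y : Type) := {
  dist : Y -> Y -> R;
  dist_nonneg : forall x y, 0 <= dist x y;
  dist_eq0 : forall x y, dist x y = 0 <-> x = y;
  dist_sym : forall x y, dist x y = dist y x;
  dist_tri : forall x y z, dist x z <= dist x y + dist y z
}.
Arguments dist {Y} m _ _.

Definition metric_open {Y : Type} (d : Metric Y) (V : Y -> Prop) : Prop :=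
  forall y, V y -> exists r, 0 < r /\ forall z, dist d y z < r -> V z.

Definition prod_open {X Y : Type} (tX : Topology X) (d : Metric Y)
  (G : X * Y -> Prop) : Prop :=
  forall x y, G (x, y) ->
    exists U V, is_open tX U /\ metric_open d V /\ U x /\ V y /\
      forall x' y', U x' -> V y' -> G (x', y').

Definition continuous {X Y : Type} (tX : Topology X) (d : Metric Y)
  (f : X -> Y) : Prop :=
  forall V, metric_open d V -> is_open tX (fun x => V (f x)).

Definition CXY {X Y : Type} (tX : Topology X) (d : Metric Y) : Type :=
  { f : X -> Y | continuous tX d f }.

Definition lsc {X : Type} (tX : Topology X) (e : X -> R) : Prop :=
  forall t : R, is_open tX (fun x => t < e x).

Definition LSC01 {X : Type} (tX : Topology X) (e : X -> R) : Prop :=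
  lsc tX e /\ forall x, 0 < e x < 1.

Definition graph_in {X Y : Type} (f : X -> Y) (G : X * Y -> Prop) : Prop :=
  forall x, G (x, f x).

Definition F_G {X Y : Type} {tX : Topology X} {d : Metric Y}
  (G : X * Y -> Prop) : CXY tX d -> Prop :=
  fun f => graph_in (proj1_sig f) G.

(* Open sets of the graph topology: the topology generated by the base
   { F_G : G open in X x Y }. *)
Definition graph_open {X Y : Type} (tX : Topology X) (d : Metric Y)
  (W : CXY tX d -> Prop) : Prop :=
  forall f, W f -> exists G, prod_open tX d G /\ F_G G f /\
    forall g, F_G G g -> W g.

Definition Ball {X Y : Type} {tX : Topology X} {d : Metric Y}
  (f : CXY tX d) (e : X -> R) : CXY tX d -> Prop :=
  fun g => forall x, dist d (proj1_sig f x) (proj1_sig g x) < e x.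

Definition is_base {T : Type} (op : (T -> Prop) -> Prop)
  (Bs : (T -> Prop) -> Prop) : Prop :=
  (forall B, Bs B -> op B) /\
  (forall W, op W -> forall f, W f ->
     exists B, Bs B /\ B f /\ forall g, B g -> W g).

From Pilot Require Import Defs.
From Stdlib Require Import Reals Lra Classical FunctionalExtensionality PropExtensionality.
Open Scope R_scope.

(* For f in C(X,Y) and e : X -> R, the "tube" T(f,e) = {(x,y) : d(f x, y) < e x}
   satisfies B(f,e) = F_{T(f,e)} by definition.
   (1) If e is lower semicontinuous, T(f,e) is open in X x Y (a triangle-
       inequality argument), and every F_G with G open is open in the graph
       topology; hence each B(f,e) is graph-open.
   (2) Conversely let G be open in X x Y with f ⊂ G.  Call s an admissible
       radius at x if 0 < s <= 1/2 and T(f,s) ⊂ G over some neighbourhood of x.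
       Admissible radii exist at every point, and admissibility at x is
       inherited by every point of the witnessing neighbourhood.  A general
       lemma shows that the pointwise supremum of such a locally inherited,
       bounded family of radii is lower semicontinuous; this supremum m lies in
       (0,1) and T(f,m) ⊂ G, so f ∈ B(f,m) ⊂ F_G. *)

Lemma open_equiv {X : Type} (tX : Topology X) (U V : X -> Prop) :
  is_open tX U -> (forall x, U x <-> V x) -> is_open tX V.
Proof.
  intros HU HUV.
  replace V with U; [exact HU |].
  apply functional_extensionality; intro x.
  apply propositional_extensionality, HUV.
Qed.

Lemma open_of_local {X : Type} (tX : Topology X) (V : X -> Prop) :
  (forall x, V x -> exists U, is_open tX U /\ U x /\ forall x', U x' -> V x') ->
  is_open tX V.
Proof.
  intros Hloc.
  apply open_equiv with
    (U := fun x => exists U, (is_open tX U /\ forall x', U x' -> V x') /\ U x).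
  - apply open_union. intros U [HU _]. exact HU.
  - intro x. split.
    + intros [U [[_ HUV] Ux]]. exact (HUV x Ux).
    + intros Vx. destruct (Hloc x Vx) as [U [HU [Ux HUV]]].
      exists U. auto.
Qed.

Lemma dist_self {Y : Type} (d : Metric Y) (y : Y) : Defs.dist d y y = 0.
Proof. apply (Defs.dist_eq0 _ d). reflexivity. Qed.

Lemma ball_open {Y : Type} (d : Metric Y) (c : Y) (r : R) :
  metric_open d (fun y => Defs.dist d c y < r).
Proof.
  intros y Hy. exists (r - Defs.dist d c y). split; [lra |].
  intros z Hz. pose proof (Defs.dist_tri _ d c y z). lra.
Qed.

Definition tube {X Y : Type} (d : Metric Y) (f : X -> Y) (e : X -> R) :
  X * Y -> Prop :=
  fun p => Defs.dist d (f (fst p)) (snd p) < e (fst p).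

Lemma tube_open {X Y : Type} (tX : Topology X) (d : Metric Y) (f : X -> Y)
  (e : X -> R) :
  continuous tX d f -> lsc tX e -> prod_open tX d (tube d f e).
Proof.
  intros Hf He x0 y0 H0. unfold tube in H0; simpl in H0.
  set (gap := e x0 - Defs.dist d (f x0) y0).
  exists (fun x => e x0 - gap / 3 < e x /\ Defs.dist d (f x0) (f x) < gap / 3).
  exists (fun y => Defs.dist d y0 y < gap / 3).
  pose proof (dist_self d (f x0)). pose proof (dist_self d y0).
  repeat split; unfold gap in *; try lra.
  - apply open_inter; [apply He | apply (Hf _ (ball_open d (f x0) _))].
  - apply ball_open.
  - intros x y [Hex Hfx] Hy. unfold tube; simpl.
    pose proof (Defs.dist_tri _ d (f x) (f x0) y0).
    pose proof (Defs.dist_tri _ d (f x) y0 y).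
    rewrite (Defs.dist_sym _ d (f x) (f x0)) in *. lra.
Qed.

Lemma F_G_graph_open {X Y : Type} (tX : Topology X) (d : Metric Y)
  (G : X * Y -> Prop) :
  prod_open tX d G -> graph_open tX d (F_G G).
Proof. intros HG f Hf. exists G. auto. Qed.

Lemma ball_graph_open {X Y : Type} (tX : Topology X) (d : Metric Y)
  (f : CXY tX d) (e : X -> R) :
  lsc tX e -> graph_open tX d (Ball f e).
Proof.
  intros He.
  apply (F_G_graph_open tX d (tube d (proj1_sig f) e)).
  apply tube_open; [exact (proj2_sig f) | exact He].
Qed.

Section SupremumOfRadii.
Variables (X : Type) (tX : Topology X) (A : X -> R -> Prop).
Hypothesis A_bounded : forall x s, A x s -> s <= 1 / 2.
Hypothesis A_nonempty : forall x, exists s, 0 < s /\ A x s.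
Hypothesis A_local : forall x s, A x s ->
  exists U, is_open tX U /\ U x /\ forall x', U x' -> A x' s.

Lemma radii_bound (x : X) : bound (A x).
Proof. exists (1 / 2). intros s Hs. exact (A_bounded x s Hs). Qed.

Lemma radii_inhabited (x : X) : exists s, A x s.
Proof. destruct (A_nonempty x) as [s [_ Hs]]. eauto. Qed.

Definition sup_radius (x : X) : R :=
  proj1_sig (completeness (A x) (radii_bound x) (radii_inhabited x)).

Lemma sup_radius_lub (x : X) : is_lub (A x) (sup_radius x).
Proof. exact (proj2_sig (completeness _ (radii_bound x) (radii_inhabited x))). Qed.

Lemma sup_radius_approx (x : X) (t : R) :
  t < sup_radius x -> exists s, t < s /\ A x s.
Proof.
  intros Ht. apply NNPP. intros Hnone.
  assert (sup_radius x <= t); [| lra].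
  apply (proj2 (sup_radius_lub x)). intros s Hs.
  destruct (Rle_or_lt s t) as [Hst | Hst]; [exact Hst |].
  exfalso. eauto.
Qed.

Lemma sup_radius_range (x : X) : 0 < sup_radius x < 1.
Proof.
  destruct (A_nonempty x) as [s [Hs As]].
  pose proof (proj1 (sup_radius_lub x) s As).
  assert (sup_radius x <= 1 / 2); [| lra].
  apply (proj2 (sup_radius_lub x)). exact (A_bounded x).
Qed.

Lemma sup_radius_lsc : lsc tX sup_radius.
Proof.
  intros t. apply open_of_local. intros x Ht.
  destruct (sup_radius_approx x t Ht) as [s [Hts As]].
  destruct (A_local x s As) as [U [HU [Ux HUA]]].
  exists U. repeat split; [exact HU | exact Ux |].
  intros x' Ux'. pose proof (proj1 (sup_radius_lub x') s (HUA x' Ux')). lra.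
Qed.

End SupremumOfRadii.

Definition admissible_radius {X Y : Type} (tX : Topology X) (d : Metric Y)
  (G : X * Y -> Prop) (f : X -> Y) (x : X) (s : R) : Prop :=
  s <= 1 / 2 /\ exists U, is_open tX U /\ U x /\
    forall x' y, U x' -> Defs.dist d (f x') y < s -> G (x', y).

Lemma admissible_radius_exists {X Y : Type} (tX : Topology X) (d : Metric Y)
  (G : X * Y -> Prop) (f : X -> Y) :
  prod_open tX d G -> continuous tX d f -> graph_in f G ->
  forall x, exists s, 0 < s /\ admissible_radius tX d G f x s.
Proof.
  intros HG Hf Hgraph x.
  destruct (HG x (f x) (Hgraph x)) as [U [V [HU [HV [Ux [Vfx HUV]]]]]].
  destruct (HV _ Vfx) as [r [Hr HrV]].
  pose proof (Rmin_l (r / 2) (1 / 2)). pose proof (Rmin_r (r / 2) (1 / 2)).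
  exists (Rmin (r / 2) (1 / 2)).
  split; [apply Rmin_pos; lra | split; [lra |]].
  exists (fun x' => U x' /\ Defs.dist d (f x) (f x') < r / 2).
  pose proof (dist_self d (f x)).
  repeat split; [| exact Ux | lra |].
  - apply open_inter; [exact HU | apply (Hf _ (ball_open d (f x) _))].
  - intros x' y [Ux' Hfx'] Hy. apply HUV; [exact Ux' |]. apply HrV.
    pose proof (Defs.dist_tri _ d (f x) (f x') y). lra.
Qed.

Lemma lsc_tube_inside {X Y : Type} (tX : Topology X) (d : Metric Y)
  (G : X * Y -> Prop) (f : X -> Y) :
  prod_open tX d G -> continuous tX d f -> graph_in f G ->
  exists e, LSC01 tX e /\ forall x y, Defs.dist d (f x) y < e x -> G (x, y).
Proof.
  intros HG Hf Hgraph.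
  set (A := admissible_radius tX d G f).
  assert (A_bounded : forall x s, A x s -> s <= 1 / 2) by (intros x s [Hs _]; exact Hs).
  assert (A_local : forall x s, A x s ->
            exists U, is_open tX U /\ U x /\ forall x', U x' -> A x' s).
  { intros x s [Hs [U [HU [Ux HUG]]]].
    exists U. split; [exact HU | split; [exact Ux |]].
    intros x' Ux'. split; [exact Hs |]. exists U. auto. }
  pose proof (admissible_radius_exists tX d G f HG Hf Hgraph) as A_nonempty.
  exists (sup_radius X A A_bounded A_nonempty).
  split; [split |].
  - exact (sup_radius_lsc X tX A A_bounded A_nonempty A_local).
  - exact (sup_radius_range X A A_bounded A_nonempty).
  - intros x y Hy.
    destruct (sup_radius_approx X A A_bounded A_nonempty x _ Hy)
      as [s [Hys [_ [U [_ [Ux HUG]]]]]].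
    exact (HUG x y Ux Hys).
Qed.

Theorem lemma1p1 (X Y : Type) (tX : Topology X) (d : Metric Y) :
  is_base (graph_open tX d)
    (fun B : CXY tX d -> Prop =>
       exists (f : CXY tX d) (e : X -> R), LSC01 tX e /\ B = Ball f e).
Proof.
  split.
  - intros B [f [e [[He _] ->]]]. exact (ball_graph_open tX d f e He).
  - intros W HW f Wf.
    destruct (HW f Wf) as [G [HG [Gf GW]]].
    destruct (lsc_tube_inside tX d G (proj1_sig f) HG (proj2_sig f) Gf)
      as [e [He HeG]].
    exists (Ball f e). split; [| split].
    + exists f, e. auto.
    + intro x. rewrite dist_self. apply He.
    + intros g Hg. apply GW. intro x. apply HeG, Hg.
Qed.
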